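(* Let $K\ge1$, $T\ge1$ and $\ell_1,\dots,\ell_T\in[0,1]^K$. AdaHedge's cumulative mixability gap satisfies \[ \big(\Delta^{\mathrm{ah}}_T\big)^2\le V^{\mathrm{ah}}_T\ln K+\big(1+\tfrac23\ln K\big)\Delta^{\mathrm{ah}}_T. \]
   Context: Hedge setting: $K$ experts; in round $t$ the learner chooses a probability vector $w_t$, then $\ell_t$ is revealed and the learner suffers $h_t=\sum_kw_{t,k}\ell_{t,k}$. Write $L_{t,k}=\sum_{s=1}^t\ell_{s,k}$ ($L_{0,k}=0$), $L^*_t=\min_kL_{t,k}$. Exponential weights with learning rate $\eta\in(0,\infty]$ at time $t$: $w_{t,k}=e^{-\eta L_{t-1,k}}/\sum_je^{-\eta L_{t-1,j}}$ if $\eta<\infty$; for $\eta=\infty$, $w_t$ uniform on $\{k:L_{t-1,k}=L^*_{t-1}\}$. With learning rate $\eta_t$ in round $t$: mix loss $m_t=-\frac1{\eta_t}\ln\sum_kw_{t,k}e^{-\eta_t\ell_{t,k}}$ if $\eta_t<\infty$, $m_t=L^*_t-L^*_{t-1}$ if $\eta_t=\infty$; mixability gap $\delta_t=h_t-m_t$; loss variance $v_t=\sum_kw_{t,k}(\ell_{t,k}-h_t)^2$. AdaHedge: $\Delta^{\mathrm{ah}}_0=0$; in round $t$, $\eta^{\mathrm{ah}}_t=\ln K/\Delta^{\mathrm{ah}}_{t-1}$ ($=\infty$ if $\Delta^{\mathrm{ah}}_{t-1}=0$), weights are exponential weights with learning rate $\eta^{\mathrm{ah}}_t$ from $L_{t-1}$,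 and $\Delta^{\mathrm{ah}}_t=\Delta^{\mathrm{ah}}_{t-1}+\delta^{\mathrm{ah}}_t$. $V^{\mathrm{ah}}_T=\sum_{t\le T}v^{\mathrm{ah}}_t$. *)

From mathcomp Require Import all_boot all_order all_algebra.
From mathcomp Require Import all_classical all_reals all_analysis.
Set Implicit Arguments. Unset Strict Implicit. Unset Printing Implicit Defensive.
Import Order.TTheory GRing.Theory Num.Theory.
Local Open Scope ring_scope.

Section AdaHedge.
Variable R : realType.
Variable K : nat.

Definition fmin : ('I_K -> R) -> R :=
  match K as n return ('I_n -> R) -> R with
  | 0 => fun _ => 0
  | n.+1 => fun f => \big[Num.min/f ord0]_(i < n.+1) f i
  end.

(* losses: l t k is the loss of expert k in round t (rounds t = 1, 2, ...) *)
Variable l : nat -> 'I_K -> R.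

Definition Lcum (t : nat) (k : 'I_K) : R := \sum_(1 <= s < t.+1) l s k.
Definition Lstar (t : nat) : R := fmin (Lcum t).

(* learning rates in (0, +oo]: None encodes eta = +oo *)
Definition lrate := option R.

Definition ew (eta : lrate) (Lp : 'I_K -> R) (k : 'I_K) : R :=
  match eta with
  | Some e => expR (- e * Lp k) / \sum_(j < K) expR (- e * Lp j)
  | None => if Lp k == fmin Lp
            then 1 / (#|[set j : 'I_K | Lp j == fmin Lp]|)%:R else 0
  end.

Definition wts (eta : lrate) (t : nat) : 'I_K -> R := ew eta (Lcum t.-1).

Definition hloss (eta : lrate) (t : nat) : R :=
  \sum_(k < K) wts eta t k * l t k.

Definition mixloss (eta : lrate) (t : nat) : R :=
  match eta with
  | Some e => - (1 / e) * ln (\sum_(k < K) wts eta t k * expR (- e * l t k))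
  | None => Lstar t - Lstar t.-1
  end.

Definition mixgap (eta : lrate) (t : nat) : R := hloss eta t - mixloss eta t.

Definition lossvar (eta : lrate) (t : nat) : R :=
  \sum_(k < K) wts eta t k * (l t k - hloss eta t) ^+ 2.

Definition ah_eta (D : R) : lrate :=
  if D == 0 then None else Some (ln (K%:R) / D).

Fixpoint ah_Delta (t : nat) : R :=
  match t with
  | 0 => 0
  | t'.+1 => ah_Delta t' + mixgap (ah_eta (ah_Delta t')) t'.+1
  end.

Definition ah_rate (t : nat) : lrate := ah_eta (ah_Delta t.-1).

Definition ah_V (T : nat) : R := \sum_(1 <= t < T.+1) lossvar (ah_rate t) t.

End AdaHedge.

(* Bernstein's bound for the mixability gap: if the losses lie in
   [0, 1] and 0 < eta < 3, then delta * (1 - eta / 3) <= eta * v / 2. It follows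
   from ln (E e^Y) <= E (e^Y - 1 - Y) for the centred losses Y = eta * (h - l)
   <= eta together with (1 - a / 3) (e^y - 1 - y) <= y^2 / 2 for y <= a < 3.
   In round t AdaHedge uses eta = ln K / Delta_{t-1}, so multiplying by
   2 Delta_{t-1} gives 2 Delta_{t-1} delta_t <= v_t ln K + 2/3 ln K delta_t;
   with delta_t^2 <= delta_t this bounds Delta_t^2 - Delta_{t-1}^2, and the
   claim follows by summing over the rounds. With eta = oo (Delta_{t-1} = 0)
   only delta_t^2 <= delta_t is needed, and for K = 1 all gaps vanish. *)

From mathcomp Require Import all_boot all_order all_algebra.
From mathcomp Require Import all_classical all_reals all_analysis.
From mathcomp Require Import ring lra.
Import Order.TTheory GRing.Theory Num.Theory numFieldNormedType.Exports.
Local Open Scope ring_scope.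

Section ExpInequalities.
Context {R : realType}.

Lemma ger0_is_derive_le {f df : R -> R} {a b : R} : a <= b ->
  (forall x, is_derive x (1 : R) f (df x)) -> (forall x, a <= x <= b -> 0 <= df x) ->
  f a <= f b.
Proof.
move=> ab fd df_ge0.
have [|c cab fab] := MVT_segment ab (fun x _ => fd x).
  apply: continuous_subspaceT => x.
  exact/differentiable_continuous/derivable1_diffP/ex_derive.
by rewrite -subr_ge0 fab mulr_ge0 ?subr_ge0 // df_ge0.
Qed.

Lemma expR_le_taylor2 (y : R) : y <= 0 -> expR y <= 1 + y + y ^+ 2 / 2.
Proof.
move=> y0.
pose f := (expR : R -> R) - (cst 1 + id + 2^-1 *: (@id R) ^+ 2).
have fd x : is_derive x (1 : R) f (expR x - (1 + x)).
  have := is_deriveB (is_derive_expR x)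
    (is_deriveD (is_deriveD (is_derive_cst (1 : R) x 1) (is_derive_id x 1))
                (is_deriveZ (2^-1 : R) (is_deriveX 2 (is_derive_id x 1)))).
  move/is_derive_eq; apply.
  by rewrite /= /GRing.scale /=; field.
have df_ge0 x : y <= x <= 0 -> 0 <= expR x - (1 + x) by rewrite subr_ge0 expR_ge1Dx.
have := ger0_is_derive_le y0 fd df_ge0.
rewrite /f !fctE /GRing.scale /= expR0 expr0n /=; lra.
Qed.

Lemma expR_mul_taylor2N_le1 (u : R) : u <= 0 -> expR u * (1 - u + u ^+ 2 / 2) <= 1.
Proof.
move=> u0.
pose f := (expR : R -> R) * (cst 1 - id + 2^-1 *: (@id R) ^+ 2).
have fd x : is_derive x (1 : R) f (expR x * (x ^+ 2 / 2)).
  have := is_deriveM (is_derive_expR x)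
    (is_deriveD (is_deriveB (is_derive_cst (1 : R) x 1) (is_derive_id x 1))
                (is_deriveZ (2^-1 : R) (is_deriveX 2 (is_derive_id x 1)))).
  move/is_derive_eq; apply.
  by rewrite /= ?fctE /= /GRing.scale /=; field.
have df_ge0 x : u <= x <= 0 -> 0 <= expR x * (x ^+ 2 / 2).
  by rewrite mulr_ge0 ?expR_ge0 ?divr_ge0 ?sqr_ge0.
have := ger0_is_derive_le u0 fd df_ge0.
rewrite /f !fctE /GRing.scale /= expR0 expr0n /=; lra.
Qed.

Lemma mulr_expR_le_pade (y : R) : 0 <= y -> (6 - 2 * y) * expR y <= 6 + 4 * y + y ^+ 2.
Proof.
move=> y0.
pose f := (cst 6 + 2 *: id) - (expR : R -> R) * (cst 6 - 4 *: id + (@id R) ^+ 2).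
have fd x : is_derive x (1 : R) f (2 - expR x * (2 - 2 * x + x ^+ 2)).
  have := is_deriveB
    (is_deriveD (is_derive_cst (6 : R) x 1) (is_deriveZ (2 : R) (is_derive_id x 1)))
    (is_deriveM (is_derive_expR x)
      (is_deriveD (is_deriveB (is_derive_cst (6 : R) x 1)
                              (is_deriveZ (4 : R) (is_derive_id x 1)))
                  (is_deriveX 2 (is_derive_id x 1)))).
  move/is_derive_eq; apply.
  by rewrite /= ?fctE /= /GRing.scale /=; ring.
have df_ge0 x : - y <= x <= 0 -> 0 <= 2 - expR x * (2 - 2 * x + x ^+ 2).
  by case/andP=> _ /expR_mul_taylor2N_le1; lra.
have Ny0 : - y <= 0 by rewrite oppr_le0.
have := ger0_is_derive_le Ny0 fd df_ge0.
rewrite /f !fctE /GRing.scale /= expR0 expr0n /= sqrrN => fNy.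
have {}fNy : 6 - 2 * y <= expR (- y) * (6 + 4 * y + y ^+ 2) by lra.
have := ler_wpM2l (expR_ge0 y) fNy.
by rewrite mulrA expRxMexpNx_1 mul1r mulrC.
Qed.

Lemma expR_remainder_le (y a : R) : y <= a -> 0 <= a -> a < 3 ->
  (1 - a / 3) * (expR y - 1 - y) <= y ^+ 2 / 2.
Proof.
move=> ya a0 a3.
have rem_ge0 : 0 <= expR y - 1 - y by rewrite subr_ge0 lerBrDr addrC expR_ge1Dx.
have [y0|y0] := leP y 0.
  apply: le_trans (_ : expR y - 1 - y <= _).
    by rewrite ler_piMl // lerBlDr lerDl divr_ge0.
  by rewrite !lerBlDr -addrA addrC (addrC y); apply: expR_le_taylor2.
have ya3 : 1 - a / 3 <= 1 - y / 3 by rewrite lerB // ler_pM2r.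
apply: le_trans (ler_wpM2r rem_ge0 ya3) _.
(* after multiplication by 6 this is mulr_expR_le_pade *)
have := mulr_expR_le_pade y (ltW y0); clear; lra.
Qed.
End ExpInequalities.

Section WeightedAverage.
Context {R : realType} {I : finType} (w : I -> R).
Hypotheses (w_ge0 : forall i, 0 <= w i) (w_sum1 : \sum_i w i = 1).

Lemma wavg_const c : \sum_i w i * c = c.
Proof. by rewrite -mulr_suml w_sum1 mul1r. Qed.

Lemma wavg_ge (x : I -> R) c : (forall i, w i != 0 -> c <= x i) -> c <= \sum_i w i * x i.
Proof.
move=> xc; rewrite -[c in c <= _]wavg_const; apply: ler_sum => i _.
by have [->|/xc ?] := eqVneq (w i) 0; rewrite ?mul0r // ler_wpM2l.
Qed.

Lemma wavg_le (x : I -> R) c : (forall i, x i <= c) -> \sum_i w i * x i <= c.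
Proof.
by move=> xc; rewrite -[c in _ <= c]wavg_const; apply: ler_sum => i _; rewrite ler_wpM2l.
Qed.

Lemma wvar_ge0 (x : I -> R) h : 0 <= \sum_i w i * (x i - h) ^+ 2.
Proof. by apply: sumr_ge0 => i _; rewrite mulr_ge0 ?sqr_ge0. Qed.

Section Mixability.
Variables (x : I -> R) (e : R).
Hypotheses (x01 : forall i, 0 <= x i <= 1) (e_gt0 : 0 < e).

Let h := \sum_i w i * x i.
Let S := \sum_i w i * expR (- e * x i).
Let d := h - (- (1 / e) * ln S).
Let y i := e * (h - x i).
Let T := \sum_i w i * expR (y i).

Lemma wavg_centered : \sum_i w i * y i = 0.
Proof.
rewrite (eq_bigr (fun i => e * (w i * h) - e * (w i * x i))) => [|i _]; last first.
  by rewrite /y; ring.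
by rewrite sumrB -!mulr_sumr wavg_const subrr.
Qed.

Lemma wmix_shiftE : T = S * expR (e * h).
Proof.
rewrite /T /S mulr_suml; apply: eq_bigr => i _.
by rewrite -mulrA -expRD /y; congr (_ * expR _); ring.
Qed.

Lemma wmix_shift_sub1E : T - 1 = \sum_i w i * (expR (y i) - 1 - y i).
Proof.
under [RHS]eq_bigr do rewrite !mulrBr mulr1.
by rewrite !sumrB wavg_centered w_sum1 subr0.
Qed.

Lemma wmix_shift_ge1 : 1 <= T.
Proof.
rewrite -subr_ge0 wmix_shift_sub1E; apply: sumr_ge0 => i _.
by rewrite mulr_ge0 // !subr_ge0 lerBrDr addrC expR_ge1Dx.
Qed.

Lemma wmix_gt0 : 0 < S.
Proof.
have := wmix_shift_ge1; rewrite wmix_shiftE => ST.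
by rewrite -(pmulr_lgt0 _ (expR_gt0 (e * h))) (lt_le_trans ltr01).
Qed.

Lemma wmix_le1 : S <= 1.
Proof.
apply: wavg_le => i; rewrite expR_le1 mulNr oppr_le0.
by case/andP: (x01 i) => xi0 _; rewrite mulr_ge0 // ltW.
Qed.

Lemma wmixgap_lnE : e * d = ln T.
Proof.
rewrite wmix_shiftE lnM ?posrE ?wmix_gt0 ?expR_gt0 // expRK /d.
by field; rewrite gt_eqF.
Qed.

Lemma wmixgap_ge0 : 0 <= d.
Proof. by rewrite -(pmulr_rge0 _ e_gt0) wmixgap_lnE ln_ge0 // wmix_shift_ge1. Qed.

Lemma wmixgap_le1 : d <= 1.
Proof.
have h1 : h <= 1 by apply: wavg_le => i; case/andP: (x01 i).
have lnS : ln S <= 0 by rewrite ln_le0 // wmix_le1.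
suff : e * d <= e * h by rewrite ler_pM2l // => /le_trans; apply.
by rewrite wmixgap_lnE wmix_shiftE lnM ?posrE ?wmix_gt0 ?expR_gt0 // expRK gerDr.
Qed.

Lemma wmixgap_bernstein : d * (1 - e / 3) <= e * (\sum_i w i * (x i - h) ^+ 2) / 2.
Proof.
have v0 := wvar_ge0 x h.
have h1 : h <= 1 by apply: wavg_le => i; case/andP: (x01 i).
have [e3|e3] := leP 3 e.
  apply: le_trans (_ : 0 <= _); last by rewrite divr_ge0 ?mulr_ge0 // ltW.
  by rewrite mulr_ge0_le0 ?wmixgap_ge0 // subr_le0 ler_pdivlMr // mul1r.
have rem_le i : (1 - e / 3) * (w i * (expR (y i) - 1 - y i)) <=
                e ^+ 2 * (w i * (x i - h) ^+ 2) / 2.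
  have yi : y i <= e.
    apply: ler_piMr; first exact: ltW.
    by case/andP: (x01 i) => xi0 _; rewrite lerBlDr (le_trans h1) // lerDl.
  have := ler_wpM2l (w_ge0 i) (expR_remainder_le _ _ yi (ltW e_gt0) e3).
  by rewrite /y mulrCA; congr (_ <= _); ring.
have lnT_le : (1 - e / 3) * ln T <= e ^+ 2 * (\sum_i w i * (x i - h) ^+ 2) / 2.
  apply: le_trans (_ : (1 - e / 3) * (T - 1) <= _).
    have c0 : 0 <= 1 - e / 3 by rewrite subr_ge0 ler_pdivrMr // mul1r ltW.
    have T_gt0 : 0 < T by apply: lt_le_trans wmix_shift_ge1.
    rewrite ler_wpM2l // lerBrDr addrC (le_trans (expR_ge1Dx _)) //.
    by rewrite lnK ?posrE.
  rewrite wmix_shift_sub1E mulr_sumr mulr_sumr mulr_suml.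
  exact: ler_sum.
rewrite -(ler_pM2l e_gt0) [d * _]mulrC mulrCA wmixgap_lnE.
by apply: le_trans lnT_le _; rewrite expr2 -!mulrA.
Qed.

End Mixability.
End WeightedAverage.

Section ExponentialWeights.
Context {R : realType} {K : nat}.
Implicit Types (f Lp : 'I_K -> R) (k : 'I_K).

Lemma fmin_le f k : fmin f <= f k.
Proof. by case: K f k => [|n] f k; [case: k | exact: bigmin_le]. Qed.

Lemma fmin_attained f : (0 < K)%N -> exists k, fmin f = f k.
Proof.
case: K f => // n f _ /=.
elim/big_ind: _ => [|_ _ [i ->] [j ->]|i _]; [by exists ord0| |by exists i].
by rewrite /Order.min; case: ifP; [exists i | exists j].
Qed.

Lemma ew_None_support Lp k : ew None Lp k != 0 -> Lp k = fmin Lp.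
Proof. by rewrite /ew; have [->|_] := eqVneq (Lp k) (fmin Lp); rewrite ?eqxx. Qed.

Lemma ew_ge0 eta Lp k : 0 <= ew eta Lp k.
Proof.
case: eta => [e|] /=; first by rewrite divr_ge0 ?expR_ge0 ?sumr_ge0 // => j _; rewrite expR_ge0.
by case: eqP => // _; rewrite divr_ge0.
Qed.

Lemma ew_sum1 eta Lp : (0 < K)%N -> \sum_k ew eta Lp k = 1.
Proof.
move=> K_gt0; case: eta => [e|] /=.
  rewrite -mulr_suml divff // gt_eqF // (bigD1 (Ordinal K_gt0)) //= ltr_wpDr ?expR_gt0 //.
  by apply: sumr_ge0 => j _; rewrite expR_ge0.
rewrite -big_mkcond sumr_const -cardsE /=.
set N := #|_|; have N_gt0 : (0 < N)%N.
  by have [k kE] := fmin_attained Lp K_gt0; apply/card_gt0P; exists k; rewrite inE kE.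
by rewrite mul1r -[_ *+ N]mulr_natr mulVf // pnatr_eq0 -lt0n.
Qed.

End ExponentialWeights.

Section AdaHedgeRounds.
Context {R : realType} {K : nat} (l : nat -> 'I_K -> R).

Lemma Lcum_S t k : Lcum l t.+1 k = Lcum l t k + l t.+1 k.
Proof. by rewrite /Lcum big_nat_recr. Qed.

Lemma lossvar_ge0 eta t : 0 <= lossvar l eta t.
Proof. exact/wvar_ge0/ew_ge0. Qed.

Lemma mixgap_None_bounds t : (0 < K)%N -> (forall k, 0 <= l t.+1 k <= 1) ->
  0 <= mixgap l None t.+1 <= 1.
Proof.
move=> K_gt0 l01.
have w_ge0 := @ew_ge0 _ _ None (Lcum l t).
have w_sum1 := @ew_sum1 _ _ None (Lcum l t) K_gt0.
set c := Lstar l t.+1 - Lstar l t.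
have c_le k : wts l None t.+1 k != 0 -> c <= l t.+1 k.
  by move=> /ew_None_support /= Lk; rewrite /c /Lstar -Lk lerBlDr addrC -Lcum_S fmin_le.
have c_ge0 : 0 <= c.
  have [k kE] := fmin_attained (Lcum l t.+1) K_gt0.
  rewrite /c /Lstar kE subr_ge0 Lcum_S (le_trans (fmin_le _ k)) // lerDl.
  by case/andP: (l01 k).
have h_ge : c <= hloss l None t.+1 by apply: wavg_ge.
have h_le1 : hloss l None t.+1 <= 1 by apply: wavg_le => // k; case/andP: (l01 k).
rewrite /mixgap /mixloss -/c subr_ge0 h_ge /=.
by rewrite lerBlDr (le_trans h_le1) // lerDl.
Qed.

Lemma mixgap_Some_bounds e t : (0 < K)%N -> 0 < e -> (forall k, 0 <= l t.+1 k <= 1) ->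
  [/\ 0 <= mixgap l (Some e) t.+1, mixgap l (Some e) t.+1 <= 1 &
      mixgap l (Some e) t.+1 * (1 - e / 3) <= e * lossvar l (Some e) t.+1 / 2].
Proof.
move=> K_gt0 e_gt0 l01.
have w_ge0 := @ew_ge0 _ _ (Some e) (Lcum l t).
have w_sum1 := @ew_sum1 _ _ (Some e) (Lcum l t) K_gt0.
split; [exact: wmixgap_ge0 | exact: wmixgap_le1 | exact: wmixgap_bernstein].
Qed.

Lemma ah_DeltaS t : ah_Delta l t.+1 = ah_Delta l t + mixgap l (ah_rate l t.+1) t.+1.
Proof. by []. Qed.

Lemma ah_VS t : ah_V l t.+1 = ah_V l t + lossvar l (ah_rate l t.+1) t.+1.
Proof. by rewrite /ah_V big_nat_recr. Qed.

Section Round.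
Variable t : nat.
Hypotheses (K_gt1 : (1 < K)%N) (l01 : forall k, 0 <= l t.+1 k <= 1).
Hypothesis Delta_ge0 : 0 <= ah_Delta l t.

Let D := ah_Delta l t.
Let d := mixgap l (ah_rate l t.+1) t.+1.
Let v := lossvar l (ah_rate l t.+1) t.+1.
Let lnK := ln (K%:R : R).

Lemma lnK_gt0 : 0 < lnK.
Proof. by rewrite ln_gt0 // ltr1n. Qed.

Lemma ah_mixgap_in01 : 0 <= d <= 1.
Proof.
have K_gt0 : (0 < K)%N by apply: ltnW.
rewrite /d /ah_rate /ah_eta /=; case: eqP => [_|/eqP D_neq0].
  exact: mixgap_None_bounds.
have e_gt0 : 0 < lnK / ah_Delta l t by rewrite divr_gt0 ?lnK_gt0 // lt_def D_neq0.
by have [-> -> _] := mixgap_Some_bounds _ _ K_gt0 e_gt0 l01.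
Qed.

Lemma ah_round_bound : 2 * d * D + d ^+ 2 <= v * lnK + (1 + 2 / 3 * lnK) * d.
Proof.
have /andP[d_ge0 d_le1] := ah_mixgap_in01.
have d2_le : d ^+ 2 <= d by rewrite expr2 ler_piMr.
have vlnK_ge0 : 0 <= v * lnK by rewrite mulr_ge0 ?lossvar_ge0 // ltW // lnK_gt0.
have lnKd_ge0 : 0 <= lnK * d by rewrite mulr_ge0 // ltW // lnK_gt0.
have [D0|D_neq0] := eqVneq D 0.
  rewrite D0 mulr0 add0r; lra.
have D_gt0 : 0 < D by rewrite lt_def D_neq0.
have e_gt0 : 0 < lnK / D by rewrite divr_gt0 ?lnK_gt0.
have bern : d * (1 - lnK / D / 3) <= lnK / D * v / 2.
  have [_ _] := mixgap_Some_bounds _ _ (ltnW K_gt1) e_gt0 l01.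
  by rewrite /d /v /ah_rate /ah_eta /= -/D (negbTE D_neq0).
have := ler_wpM2l (mulr_ge0 (ler0n _ 2) Delta_ge0) bern.
have -> : 2 * D * (d * (1 - lnK / D / 3)) = 2 * d * D - 2 / 3 * (lnK * d).
  by field; rewrite gt_eqF.
have -> : 2 * D * (lnK / D * v / 2) = v * lnK by field; rewrite gt_eqF.
lra.
Qed.
End Round.

Lemma ah_Delta_sqr_le n : (1 < K)%N ->
  (forall t k, (1 <= t <= n)%N -> 0 <= l t k <= 1) ->
  0 <= ah_Delta l n /\
  ah_Delta l n ^+ 2 <= ah_V l n * ln (K%:R : R) + (1 + 2 / 3 * ln (K%:R : R)) * ah_Delta l n.
Proof.
move=> K_gt1; elim: n => [_|n IH l01].
  by rewrite /ah_V big_geq //= expr0n /= mul0r mulr0 addr0.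
have l01n t k : (1 <= t <= n)%N -> 0 <= l t k <= 1.
  by case/andP=> t_ge1 t_le; rewrite l01 // t_ge1 leqW.
have [D_ge0 D_bound] := IH l01n.
have ln01 k : 0 <= l n.+1 k <= 1 by rewrite l01 ?leqnn.
have /andP[d_ge0 _] := ah_mixgap_in01 n K_gt1 ln01 D_ge0.
have step := ah_round_bound n K_gt1 ln01 D_ge0.
rewrite ah_DeltaS ah_VS; split; first exact: addr_ge0.
move: D_bound step; set D := ah_Delta l n; set d := mixgap _ _ _; set V := ah_V l n.
set v := lossvar _ _ _; set L := ln _; nra.
Qed.

End AdaHedgeRounds.

Lemma ah_Delta_single_expert {R : realType} (l : nat -> 'I_1 -> R) n : ah_Delta l n = 0.
Proof.
elim: n => //= n ->; rewrite add0r /ah_eta eqxx /mixgap /hloss /mixloss big_ord1.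
have := @ew_sum1 _ _ None (Lcum l n) isT; rewrite big_ord1 /wts /= => ->.
by rewrite !big_ord_recl !big_ord0 !minxx Lcum_S mul1r; ring.
Qed.

Theorem lemma5 (R : realType) (K T : nat) (l : nat -> 'I_K -> R) :
  (1 <= K)%N -> (1 <= T)%N ->
  (forall (t : nat) (k : 'I_K), (1 <= t <= T)%N -> 0 <= l t k <= 1) ->
  ah_Delta l T ^+ 2 <=
    ah_V l T * ln (K%:R : R) + (1 + 2 / 3 * ln (K%:R : R)) * ah_Delta l T.
Proof.
move=> K_ge1 _ l01.
have [K_gt1|K_le1] := ltnP 1 K; first by case: (ah_Delta_sqr_le l T K_gt1 l01).
have K1 : K = 1%N by apply/eqP; rewrite eqn_leq K_le1 K_ge1.
by subst K; rewrite ah_Delta_single_expert ln1 expr0n /= !mulr0 addr0.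
Qed.
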